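(* Let $n\ge 3$. There is no finite subset $Y\subseteq\mathbb{S}^{n-1}$ which is a spherical design of harmonic index $\{6,2\}$ and has \[|Y|=\frac{n(n+4)(2n+1)^2}{15(7n-4)},\] i.e. there exists no tight spherical design of harmonic index $\{6,2\}$ on $\mathbb{S}^{n-1}$ for $n\ge3$.
   Context: $\mathbb{S}^{n-1}$ is the unit sphere in $\mathbb{R}^n$. For $T\subseteq\mathbb{N}$, a finite $Y\subseteq\mathbb{S}^{n-1}$ is a spherical design of harmonic index $T$ if $\sum_{\mathbf{x}\in Y}f(\mathbf{x})=0$ for every real homogeneous harmonic polynomial $f$ in $n$ variables whose degree lies in $T$. With Gegenbauer polynomials $Q_{n,k}$ (orthogonal on $[-1,1]$ for the weight $(1-x^2)^{(n-3)/2}$, $Q_{n,k}(1)=\binom{n+k-1}{n-1}-\binom{n+k-3}{n-1}$; e.g. $Q_{n,2}(x)=\frac{(n+2)(nx^2-1)}{2}$), the polynomial $Q_{n,6}(x)+f_2Q_{n,2}(x)$ with $f_2=\frac{(n-2)(n+4)(n+10)}{32(n+8)}$ equals $ax^2(x^2-\alpha^2)^2-c_{n,T}$ with $a>0$, $\alpha^2=\frac{15}{2(n+8)}$, $c_{n,T}=\frac{(n+2)(n+6)(n+10)(7n-4)}{192(n+8)}$, giving the lower bound $|Y|\ge b_{n,T}=\frac{n(n+4)(2n+1)^2}{15(7n-4)}$ for designs of harmonic index $\{6,2\}$; a design attaining it is called tight. *)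

From HB Require Import structures.
From mathcomp Require Import all_boot all_order all_algebra.
From mathcomp Require Import reals.
From mathcomp Require Import mpoly.
Set Implicit Arguments. Unset Strict Implicit. Unset Printing Implicit Defensive.
Import Order.TTheory GRing.Theory Num.Theory.
Local Open Scope ring_scope.

Definition on_sphere (R : realType) (n : nat) (x : 'rV[R]_n) : Prop :=
  \sum_(i < n) x 0 i ^+ 2 = 1.

Definition mlaplacian (R : realType) (n : nat) (p : {mpoly R[n]}) : {mpoly R[n]} :=
  \sum_(i < n) mderiv i (mderiv i p).

Definition harmonic_homog (R : realType) (n k : nat) (f : {mpoly R[n]}) : Prop :=
  f \is k.-homog /\ mlaplacian f = 0.

Definition harmonic_index_design (R : realType) (n : nat) (T : nat -> Prop)
    (Y : seq 'rV[R]_n) : Prop :=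
  uniq Y /\ (forall x, x \in Y -> on_sphere x) /\
  forall (k : nat) (f : {mpoly R[n]}), T k -> harmonic_homog k f ->
    \sum_(x <- Y) f.@[fun i => x 0 i] = 0.

From HB Require Import structures.
From mathcomp Require Import all_boot all_order all_algebra.
From mathcomp Require Import reals.
From mathcomp Require Import mpoly.
From mathcomp Require Import ring lra zify ssrZ.
From Stdlib Require ZArith List.
Set Implicit Arguments. Unset Strict Implicit. Unset Printing Implicit Defensive.
Import Order.TTheory GRing.Theory Num.Theory.
Local Open Scope ring_scope.

(* Fix y in Y. The polynomial F(t) = t^2 (2(n+8) t^2 - 15)^2 is a combination
   of Q_{n,6}, Q_{n,2} and a constant, so the design conditions and the size of
   Y evaluate the sum of F(<x, y>) over x in Y; the value is exactly F(1), the
   term x = y. As F >= 0, every other inner product is 0 or +-a with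
   a^2 = 15 / (2(n+8)). Now take y, z in Y with <y, z> <> 0 and test the
   degree-2 harmonic n <y, x> <z, x> - <y, z> |x|^2: the products <x, y> <x, z>
   of the remaining points are 0 or +-a^2, which yields an integer k with
   15 n^2 k^2 = 2 (n+8) (|Y| - 2n)^2. Finally, |Y| is an integer only if
   7n - 4 divides 28800, which leaves n = 12 and n = 92, where this equation
   has no integer solution. *)

(* Proportional to the Gegenbauer polynomial Q_{n,6}. *)
Definition gegen6 (R : pzRingType) (n : nat) (t : R) : R :=
  t ^+ 6 *+ ((n + 8) * (n + 6) * (n + 4)) - t ^+ 4 *+ (15 * (n + 6) * (n + 4))
  + t ^+ 2 *+ (45 * (n + 4)) - 15.

Section HarmonicPolynomials.
Variables (R : realType) (n : nat).
Implicit Types (p q : {mpoly R[n]}) (x y z : 'rV[R]_n).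

Lemma mderivXU i j : mderiv i ('X_j : {mpoly R[n]}) = (i == j)%:R.
Proof.
rewrite mderivX mnm1E; have [->|ne] := eqVneq j i; last by rewrite scale0r.
have -> : (U_(i) - U_(i) = 0)%MM by apply/mnmP => k; rewrite mnmBE subnn mnm0E.
by rewrite mpolyX0 scale1r.
Qed.

Lemma mderivXn i p k : mderiv i (p ^+ k.+1) = p ^+ k * mderiv i p *+ k.+1.
Proof.
elim: k => [|k IH]; first by rewrite expr1 expr0 mul1r.
by rewrite exprS mderivM IH !exprS; ring.
Qed.

Lemma mlaplacianD p q : mlaplacian (p + q) = mlaplacian p + mlaplacian q.
Proof. by rewrite /mlaplacian -big_split; apply: eq_bigr => i _; rewrite !mderivD. Qed.

Lemma mlaplacianN p : mlaplacian (- p) = - mlaplacian p.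
Proof. by rewrite /mlaplacian -sumrN; apply: eq_bigr => i _; rewrite !mderivN. Qed.

Lemma mlaplacianMn p k : mlaplacian (p *+ k) = mlaplacian p *+ k.
Proof. by rewrite /mlaplacian -sumrMnl; apply: eq_bigr => i _; rewrite !mderivMn. Qed.

Lemma mlaplacianZ c p : mlaplacian (c *: p) = c *: mlaplacian p.
Proof. by rewrite /mlaplacian scaler_sumr; apply: eq_bigr => i _; rewrite !mderivZ. Qed.

Definition mgrad_dot p q : {mpoly R[n]} := \sum_(i < n) mderiv i p * mderiv i q.

Lemma mlaplacianM p q :
  mlaplacian (p * q) = mlaplacian p * q + mgrad_dot p q *+ 2 + p * mlaplacian q.
Proof.
rewrite /mlaplacian /mgrad_dot mulr_suml mulr_sumr -sumrMnl -!big_split.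
by apply: eq_bigr => i _ /=; rewrite !mderivM mderivD !mderivM; ring.
Qed.

Definition rdot x y : R := \sum_(i < n) x 0 i * y 0 i.
Definition mlinform y : {mpoly R[n]} := \sum_(i < n) y 0 i *: 'X_i.
Definition msqnorm : {mpoly R[n]} := \sum_(i < n) 'X_i ^+ 2.

Lemma rdotC x y : rdot x y = rdot y x.
Proof. by apply: eq_bigr => i _; rewrite mulrC. Qed.

Lemma mderiv_linform y i : mderiv i (mlinform y) = (y 0 i)%:MP.
Proof.
rewrite linear_sum (bigD1 i) //= big1 => [|j ji]; rewrite linearZ /= mderivXU.
  by rewrite eqxx addr0 -alg_mpolyC.
by rewrite eq_sym (negbTE ji) scaler0.
Qed.

Lemma mderiv_sqnorm i : mderiv i msqnorm = 'X_i *+ 2.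
Proof.
rewrite linear_sum (bigD1 i) //= big1 => [|j ji]; rewrite mderivXn expr1 mderivXU.
  by rewrite eqxx mulr1 addr0.
by rewrite eq_sym (negbTE ji) mulr0 mul0rn.
Qed.

Lemma mlaplacian_linform y : mlaplacian (mlinform y) = 0.
Proof. by rewrite /mlaplacian big1 // => i _; rewrite mderiv_linform mderivC. Qed.

Lemma mlaplacian_sqnorm : mlaplacian msqnorm = (2 * n)%:R.
Proof.
rewrite /mlaplacian (eq_bigr (fun _ => 2%:R)) => [|i _].
  by rewrite sumr_const card_ord natrM mulr_natr.
by rewrite mderiv_sqnorm raddfMn /= mderivXU eqxx.
Qed.

Lemma mgrad_dot_linform y z : mgrad_dot (mlinform y) (mlinform z) = (rdot y z)%:MP.
Proof.
rewrite /mgrad_dot /rdot rmorph_sum; apply: eq_bigr => i _ /=.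
by rewrite !mderiv_linform mpolyCM.
Qed.

Lemma mlaplacian_linformXn y a :
  mlaplacian (mlinform y ^+ a.+2) = mlinform y ^+ a * (rdot y y)%:MP *+ (a.+2 * a.+1).
Proof.
rewrite /mlaplacian /rdot rmorph_sum mulr_sumr -sumrMnl; apply: eq_bigr => i _ /=.
rewrite mderivXn raddfMn /= mderivM mderivXn !mderiv_linform mderivC mpolyCM.
by ring.
Qed.

Lemma mgrad_dot_linformXn_sqnormXn y a b :
  mgrad_dot (mlinform y ^+ a.+1) (msqnorm ^+ b.+1) =
  mlinform y ^+ a.+1 * msqnorm ^+ b *+ (2 * a.+1 * b.+1).
Proof.
rewrite /mgrad_dot (eq_bigr (fun i => mlinform y ^+ a * msqnorm ^+ b *
  ((y 0 i)%:MP * 'X_i) *+ (2 * a.+1 * b.+1))) => [|i _].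
  rewrite sumrMnl -mulr_sumr (eq_bigr _ (fun i _ => mul_mpolyC _ _)) exprS.
  by rewrite -/(mlinform y); congr (_ *+ _); ring.
by rewrite !mderivXn mderiv_linform mderiv_sqnorm; ring.
Qed.

Lemma mlaplacian_sqnormXn c :
  mlaplacian (msqnorm ^+ c.+2) = msqnorm ^+ c.+1 *+ (4 * c.+1 * c.+2 + 2 * n * c.+2).
Proof.
rewrite /mlaplacian (eq_bigr (fun i => msqnorm ^+ c * ('X_i ^+ 2) *+ (4 * c.+1 * c.+2)
  + msqnorm ^+ c.+1 *+ (2 * c.+2))) => [|i _].
  by rewrite big_split /= sumrMnl -mulr_sumr -/msqnorm sumr_const card_ord exprS; ring.
rewrite mderivXn raddfMn /= mderivM mderivXn !mderiv_sqnorm mderivMn mderivXU.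
by rewrite eqxx /=; ring.
Qed.

Lemma mpolyXU_homog i : ('X_i : {mpoly R[n]}) \is 1.-homog.
Proof. by rewrite dhomogX; apply/eqP/mdeg1. Qed.

Lemma mlinform_homog y : mlinform y \is 1.-homog.
Proof. by apply: rpred_sum => i _; rewrite rpredZ ?mpolyXU_homog. Qed.

Lemma msqnorm_homog : msqnorm \is 2.-homog.
Proof.
by apply: rpred_sum => i _; exact: dhomogMn 2 (mpolyXU_homog i).
Qed.

Definition zonal6 y : {mpoly R[n]} :=
  mlinform y ^+ 6 *+ ((n + 8) * (n + 6) * (n + 4))
  - mlinform y ^+ 4 * msqnorm *+ (15 * (n + 6) * (n + 4))
  + mlinform y ^+ 2 * msqnorm ^+ 2 *+ (45 * (n + 4)) - msqnorm ^+ 3 *+ 15.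

Definition harm2 y z : {mpoly R[n]} :=
  mlinform y * mlinform z *+ n - rdot y z *: msqnorm.

Lemma zonal6_harmonic y : rdot y y = 1 -> harmonic_homog 6 (zonal6 y).
Proof.
move=> y1; have hl := mlinform_homog y; split.
  rewrite /zonal6; apply: rpredB; [apply: rpredD; [apply: rpredB|]|]; apply: rpredMn.
  - exact: dhomogMn 6 hl.
  - exact: dhomogM (dhomogMn 4 hl) msqnorm_homog.
  - exact: dhomogM (dhomogMn 2 hl) (dhomogMn 2 msqnorm_homog).
  - exact: dhomogMn 3 msqnorm_homog.
rewrite /zonal6 !(mlaplacianD, mlaplacianN, mlaplacianMn).
rewrite (mlaplacianM (mlinform y ^+ 4)) (mlaplacianM (mlinform y ^+ 2)).
rewrite (mlaplacian_linformXn _ 4).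
rewrite (mlaplacian_linformXn _ 2) (mlaplacian_linformXn _ 0).
rewrite -[msqnorm in mgrad_dot _ msqnorm]expr1 (mgrad_dot_linformXn_sqnormXn _ 3 0).
rewrite (mgrad_dot_linformXn_sqnormXn _ 1 1) (mlaplacian_sqnormXn 0).
rewrite (mlaplacian_sqnormXn 1) expr1 mlaplacian_sqnorm y1 mpolyC1 expr0.
by ring.
Qed.

Lemma harm2_harmonic y z : harmonic_homog 2 (harm2 y z).
Proof.
split.
  rewrite /harm2 rpredB ?rpredMn ?rpredZ ?msqnorm_homog //.
  exact: dhomogM (mlinform_homog y) (mlinform_homog z).
rewrite /harm2 mlaplacianD mlaplacianN mlaplacianMn mlaplacianZ mlaplacianM.
rewrite !mlaplacian_linform mgrad_dot_linform.
by rewrite mlaplacian_sqnorm -mul_mpolyC; ring.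
Qed.

Lemma meval_linform x y : (mlinform y).@[fun i => x 0 i] = rdot y x.
Proof. by rewrite raddf_sum; apply: eq_bigr => i _; rewrite /= mevalZ mevalXU. Qed.

Lemma meval_sqnorm x : msqnorm.@[fun i => x 0 i] = rdot x x.
Proof.
by rewrite raddf_sum; apply: eq_bigr => i _; rewrite /= rmorphXn /= mevalXU expr2.
Qed.

Lemma on_sphere_rdot x : on_sphere x -> rdot x x = 1.
Proof. by rewrite /on_sphere => <-; apply: eq_bigr => i _; rewrite expr2. Qed.

Lemma meval_zonal6 x y :
  on_sphere x -> (zonal6 y).@[fun i => x 0 i] = gegen6 n (rdot x y).
Proof.
move=> /on_sphere_rdot x1.
rewrite /zonal6 !(rmorphD, rmorphB, rmorphN, rmorphMn, rmorphM, rmorphXn) /=.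
by rewrite meval_linform meval_sqnorm x1 rdotC /gegen6; ring.
Qed.

Lemma meval_harm2 x y z : on_sphere x ->
  (harm2 y z).@[fun i => x 0 i] = n%:R * (rdot x y * rdot x z) - rdot y z.
Proof.
move=> /on_sphere_rdot x1.
rewrite /harm2 !(rmorphB, rmorphN, rmorphMn, rmorphM) /= mevalZ.
rewrite !meval_linform meval_sqnorm x1.
by rewrite (rdotC y x) (rdotC z x); ring.
Qed.

Variables (T : nat -> Prop) (Y : seq 'rV[R]_n).
Hypothesis Y_design : harmonic_index_design T Y.

Lemma design_gegen6 :
  T 6 -> {in Y, forall y, \sum_(x <- Y) gegen6 n (rdot x y) = 0}.
Proof.
have [_ [Y_sphere Y_sum]] := Y_design; move=> T6 y yY.
rewrite -[RHS](Y_sum _ _ T6 (zonal6_harmonic (on_sphere_rdot (Y_sphere y yY)))).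
by apply: eq_big_seq => x xY; rewrite meval_zonal6 //; apply: Y_sphere.
Qed.

Lemma design_harm2 : T 2 ->
  {in Y &, forall y z, \sum_(x <- Y) (n%:R * (rdot x y * rdot x z) - rdot y z) = 0}.
Proof.
have [_ [Y_sphere Y_sum]] := Y_design; move=> T2 y z yY zY.
rewrite -[RHS](Y_sum _ _ T2 (harm2_harmonic y z)).
by apply: eq_big_seq => x xY; rewrite meval_harm2 //; apply: Y_sphere.
Qed.

End HarmonicPolynomials.

Section TightGram.
Variables (R : archiRealFieldType) (n : nat) (T : eqType) (Y : seq T).
Variable ip : T -> T -> R.
Local Notation N := (n%:R : R).
Local Notation m := (size Y).

(* The paper's a x^2 (x^2 - alpha^2)^2 up to the factor a; [lp_polyE] is its
   identity Q_{n,6} + f_2 Q_{n,2} = a x^2 (x^2 - alpha^2)^2 - c_{n,T}, with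
   denominators cleared. *)
Definition lp_poly (t : R) : R := t ^+ 2 * (2 * (N + 8) * t ^+ 2 - 15) ^+ 2.

Lemma lp_polyE t : N * (N + 6) * (N + 4) * lp_poly t =
  4 * N * (N + 8) * gegen6 n t + 45 * (N + 4) * (N - 2) * (N * t ^+ 2 - 1)
  + 15 * (7 * N - 4) * (N + 6).
Proof. by rewrite /lp_poly /gegen6; ring. Qed.

Lemma lp_poly_ge0 t : 0 <= lp_poly t.
Proof. by rewrite mulr_ge0 ?sqr_ge0. Qed.

Lemma lp_poly1 : lp_poly 1 = (2 * N + 1) ^+ 2.
Proof. by rewrite /lp_poly; ring. Qed.

Lemma lp_poly_eq0 t : lp_poly t = 0 -> t = 0 \/ 2 * (N + 8) * t ^+ 2 = 15.
Proof.
move/eqP; rewrite mulf_eq0 !expf_eq0 /= subr_eq0 => /orP[] /eqP; by [left | right].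
Qed.

Hypotheses (n_ge3 : (3 <= n)%N) (Y_uniq : uniq Y).
Hypothesis ipC : forall x y, ip x y = ip y x.
Hypothesis ip_unit : {in Y, forall x, ip x x = 1}.
Hypothesis Y_design6 : {in Y, forall y, \sum_(x <- Y) gegen6 n (ip x y) = 0}.
Hypothesis Y_design2 :
  {in Y &, forall y z, \sum_(x <- Y) (N * (ip x y * ip x z) - ip y z) = 0}.
Hypothesis Y_tight :
  (m * (15 * (7 * n - 4)) = n * (n + 4) * (2 * n + 1) ^ 2)%N.

Let N_ge3 : 3 <= N. Proof. by rewrite ler_nat. Qed.

Let Y_tightR : m%:R * (15 * (7 * N - 4)) = N * (N + 4) * (2 * N + 1) ^+ 2.
Proof.
have /eqP := Y_tight; rewrite -(eqr_nat R) !natrM natrB; last by lia.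
by rewrite !(natrM, natrD, natrX) => /eqP ->; ring.
Qed.

Lemma sum_lp_poly : {in Y, forall y, \sum_(x <- Y) lp_poly (ip x y) = (2 * N + 1) ^+ 2}.
Proof.
move=> y yY; have N3 := N_ge3.
have cN : N * (N + 6) * (N + 4) != 0 by rewrite lt0r_neq0 // !mulr_gt0 //; lra.
have e2 : \sum_(x <- Y) (N * ip x y ^+ 2 - 1) = 0.
  by rewrite -[RHS](Y_design2 yY yY) ip_unit //; apply: eq_bigr => x _; rewrite expr2.
apply: (mulfI cN); rewrite mulr_sumr (eq_bigr _ (fun x _ => lp_polyE (ip x y))).
rewrite !big_split /= -!mulr_sumr Y_design6 // e2 big_const_seq count_predT iter_addr_0.
transitivity ((N + 6) * (m%:R * (15 * (7 * N - 4)))); first by ring.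
by rewrite Y_tightR; ring.
Qed.

Lemma gram_offdiag_values :
  {in Y &, forall x y, x != y -> ip x y = 0 \/ 2 * (N + 8) * ip x y ^+ 2 = 15}.
Proof.
move=> x y xY yY xy; apply: lp_poly_eq0.
have := sum_lp_poly yY; rewrite (bigD1_seq y) //= ip_unit // lp_poly1.
rewrite -[X in _ = X]addr0 => /addrI/eqP.
rewrite psumr_eq0 => [/allP/(_ x xY)|]; last by move=> *; apply: lp_poly_ge0.
by rewrite xy => /eqP.
Qed.

Lemma exists_nonorthogonal_pair :
  exists y z, [/\ y \in Y, z \in Y, z != y & ip z y != 0].
Proof.
have [y yY] : exists y, y \in Y.
  case: Y Y_tight => [|y s]; last by exists y; rewrite mem_head.
  by rewrite mul0n => /esym/eqP; rewrite !muln_eq0; lia.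
exists y; have [/hasP[z zY /andP[zy ipz]] | /hasPn ip0] :=
  boolP (has (fun z => (z != y) && (ip z y != 0)) Y); first by exists z.
have := Y_design2 yY yY; rewrite sumrB -mulr_sumr big_const_seq count_predT iter_addr_0.
rewrite (bigD1_seq y) //= ip_unit // big1_seq => [|x /andP[xy xY]]; last first.
  by have := ip0 x xY; rewrite xy /= negbK => /eqP ->; rewrite mul0r.
rewrite mul1r addr0 mulr1 => /subr0_eq mN; exfalso.
by move: Y_tightR N_ge3; rewrite -mN; nra.
Qed.

Lemma gram_product_int x y z : x \in Y -> y \in Y -> z \in Y -> x != y -> x != z ->
  2 * (N + 8) / 15 * (ip x y * ip x z) \is a Num.int.
Proof.
move=> xY yY zY xy xz.
have [->|hy] := gram_offdiag_values xY yY xy; first by rewrite mul0r mulr0.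
have [->|hz] := gram_offdiag_values xY zY xz; first by rewrite !mulr0.
have : (2 * (N + 8) / 15 * (ip x y * ip x z)) ^+ 2 == 1.
  apply/eqP; transitivity
    (2 * (N + 8) * ip x y ^+ 2 * (2 * (N + 8) * ip x z ^+ 2) / 15 ^+ 2); first by field.
  by rewrite hy hz; field.
by rewrite sqrf_eq1 => /orP[] /eqP ->; rewrite ?rpredN rpred1.
Qed.

Lemma tight_gram_relation :
  exists k : int, 15 * N ^+ 2 * k%:~R ^+ 2 = 2 * (N + 8) * (m%:R - 2 * N) ^+ 2.
Proof.
have [y [z [yY zY zy s_neq0]]] := exists_nonorthogonal_pair.
have s2 : 2 * (N + 8) * ip z y ^+ 2 = 15.
  by case: (gram_offdiag_values zY yY zy) => // s0; rewrite s0 eqxx in s_neq0.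
set s := ip z y in s2.
(* K is the sum of the signs of the products <x, y> <x, z> over the other points. *)
pose K := \sum_(x <- Y | (x != y) && (x != z)) 2 * (N + 8) / 15 * (ip x y * ip x z).
have [k Kk] : exists k : int, K = k%:~R.
  apply/intrP; rewrite /K big_seq_cond; apply: rpred_sum => x /and3P[xY xy xz].
  exact: gram_product_int.
exists k; rewrite -Kk.
have N8 : N + 8 != 0 by rewrite lt0r_neq0 //; move: N_ge3; lra.
have : \sum_(x <- Y) ip x y * ip x z = 2 * s + 15 / (2 * (N + 8)) * K.
  rewrite (bigD1_seq y) //= -big_filter (bigD1_seq z) ?mem_filter ?zy ?filter_uniq //=.
  rewrite big_filter_cond /K mulr_sumr !ip_unit // (ipC y z) mul1r mulr1 addrA.
  congr (_ + _); first by rewrite /s; ring.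
  by apply: eq_bigr => x _; field.
have := Y_design2 yY zY; rewrite sumrB -mulr_sumr big_const_seq count_predT iter_addr_0.
move=> e sumE; rewrite sumE (ipC y z) -/s in e.
have e1 : 15 * N * K = 2 * (N + 8) * s * (m%:R - 2 * N).
  by apply/eqP; rewrite -subr_eq0 -(mulr0 (2 * (N + 8))) -e; apply/eqP; field.
have n15 : 15 != 0 :> R by rewrite pnatr_eq0.
apply: (mulfI n15).
transitivity ((15 * N * K) ^+ 2); first by ring.
rewrite e1; transitivity (2 * (N + 8) * s ^+ 2 * (2 * (N + 8)) * (m%:R - 2 * N) ^+ 2).
  by ring.
by rewrite s2; ring.
Qed.

End TightGram.

Section TightSizeArithmetic.
Import ZArith List.
Local Open Scope Z_scope.

(* 7^4 n (n+4) (2n+1)^2 = 7n (7n+28) (14n+7)^2 = 4 * 32 * 15^2 modulo 7n - 4. *)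
Lemma tight_size_divisor (n m : Z) :
  15 * (7 * n - 4) * m = n * (n + 4) * (2 * n + 1) ^ 2 -> (7 * n - 4 | 28800).
Proof.
move=> hm; exists (36015 * m - (1372 * n ^ 3 + 7644 * n ^ 2 + 10199 * n + 7200)).
transitivity (2401 * (15 * (7 * n - 4) * m)
  - (7 * n - 4) * (1372 * n ^ 3 + 7644 * n ^ 2 + 10199 * n + 7200)); last by ring.
by rewrite hm; ring.
Qed.

Definition tight_size_integral (n : Z) : bool :=
  (n * (n + 4) * (2 * n + 1) ^ 2) mod (15 * (7 * n - 4)) =? 0.

(* 3 <= n <= 4114 is the range left by 7n - 4 <= 28800. *)
Lemma tight_size_integral_small :
  forallb (fun n => tight_size_integral n ==> (n =? 12) || (n =? 92))
    (map Z.of_nat (seq 3 4112)) = true.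
Proof. by vm_compute. Qed.

Lemma tight_size_values (n m : Z) : 3 <= n ->
  15 * (7 * n - 4) * m = n * (n + 4) * (2 * n + 1) ^ 2 ->
  n = 12 /\ m = 100 \/ n = 92 /\ m = 31487.
Proof.
move=> n3 hm.
have n_le : 7 * n - 4 <= 28800 by apply: Z.divide_pos_le (tight_size_divisor hm).
have hint : tight_size_integral n.
  by apply/Z.eqb_eq; rewrite -hm Z.mul_comm Z.mod_mul //; lia.
have hin : exists x, Z.of_nat x = n /\ In x (seq 3 4112).
  by exists (Z.to_nat n); rewrite in_seq; lia.
have := tight_size_integral_small; rewrite forallb_forall => /(_ n).
rewrite in_map_iff => /(_ hin) /implyP /(_ hint) /orP[] /Z.eqb_eq n_eq; subst n.
- by left; split=> //; lia.
- by right; split=> //; lia.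
Qed.

Lemma tight_relation_unsolvableZ (n m k : Z) : 3 <= n ->
  15 * (7 * n - 4) * m = n * (n + 4) * (2 * n + 1) ^ 2 ->
  15 * n ^ 2 * k ^ 2 <> 2 * (n + 8) * (m - 2 * n) ^ 2.
Proof.
move=> n3 /(tight_size_values n3) [] [-> ->]; lia.
Qed.

End TightSizeArithmetic.

Lemma tight_relation_unsolvable (R : numFieldType) (n m : nat) (k : int) :
  (3 <= n)%N -> (m * (15 * (7 * n - 4)) = n * (n + 4) * (2 * n + 1) ^ 2)%N ->
  15 * n%:R ^+ 2 * k%:~R ^+ 2 != 2 * (n%:R + 8) * (m%:R - 2 * n%:R) ^+ 2 :> R.
Proof.
move=> n3 hm; apply/negP => /eqP e.
have : 15 * n%:Z ^+ 2 * k ^+ 2 = 2 * (n%:Z + 8) * (m%:Z - 2 * n%:Z) ^+ 2.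
  apply: (@intr_inj R).
  by transitivity (15 * n%:R ^+ 2 * k%:~R ^+ 2 : R); [ring | rewrite e; ring].
move=> hk; apply: (@tight_relation_unsolvableZ
  (BinInt.Z.of_nat n) (BinInt.Z.of_nat m) (Z_of_int k)); lia.
Qed.

Lemma tight_size_nat (R : numFieldType) (n m : nat) : (3 <= n)%N ->
  m%:R = (n * (n + 4) * (2 * n + 1) ^ 2)%:R / (15 * (7 * n - 4))%:R :> R ->
  (m * (15 * (7 * n - 4)) = n * (n + 4) * (2 * n + 1) ^ 2)%N.
Proof.
move=> n3 /(congr1 ( *%R^~ (15 * (7 * n - 4))%:R)).
rewrite mulfVK ?pnatr_eq0; last by lia.
by rewrite -natrM => /eqP; rewrite eqr_nat => /eqP.
Qed.

Theorem mainTheorem8 (R : realType) (n : nat) : (3 <= n)%N ->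
  ~ exists Y : seq 'rV[R]_n,
      harmonic_index_design (fun k => k = 6%N \/ k = 2%N) Y /\
      (size Y)%:R = (n * (n + 4) * (2 * n + 1) ^ 2)%:R / (15 * (7 * n - 4))%:R :> R.
Proof.
move=> n_ge3 [Y [Y_design /(tight_size_nat n_ge3) Y_tight]].
have [Y_uniq [Y_sphere _]] := Y_design.
have Y_unit : {in Y, forall x, rdot x x = 1}.
  by move=> x /Y_sphere/on_sphere_rdot.
have [k] := tight_gram_relation n_ge3 Y_uniq (@rdotC R n) Y_unit
  (design_gegen6 Y_design (or_introl erefl)) (design_harm2 Y_design (or_intror erefl))
  Y_tight.
by move=> /eqP; apply/negP; exact: tight_relation_unsolvable n_ge3 Y_tight.
Qed.
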